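(* Let $\mathcal{W}=\{1,\ldots,n\}$ be a finite vocabulary, let $\#(i,j)\ge 0$ be co-occurrence counts for $i,j\in\mathcal{W}$ with $\#(i,j)>0$ for all $i,j$, let $N=\sum_{i,j\in\mathcal{W}}\#(i,j)$, $\#(i)=\sum_{j\in\mathcal{W}}\#(i,j)$, $p(i,j)=\#(i,j)/N$, $p(i)=\#(i)/N$, and let $k>0$ be the number of negative samples. Suppose $\mathbf{w}_i,\mathbf{c}_j\in\mathbb{R}^d$ satisfy $0<\langle\mathbf{w}_i,\mathbf{c}_j\rangle<1$ for all $i,j$. Consider the objective $$\mathcal{L}=\sum_{i\in\mathcal{W}}\sum_{j\in\mathcal{W}}\#(i,j)\Big(\log\langle\mathbf{w}_i,\mathbf{c}_j\rangle+k\cdot\mathbb{E}_{j'\sim P}\big[\log(1-\langle\mathbf{w}_i,\mathbf{c}_{j'}\rangle)\big]\Big),$$ where $P$ is the unigram distribution $P(j')=p(j')$. Then, viewing $\mathcal{L}$ as a function of the quantities $x_{ij}=\langle\mathbf{w}_i,\mathbf{c}_j\rangle\in(0,1)$ treated as independent variables, $\mathcal{L}$ reaches its optimum (maximum) at $$\langle\mathbf{w}_i,\mathbf{c}_j\rangle=\sigma\Big(\log\frac{p(i,j)}{p(i)p(j)}-\log k\Big)\quad\text{for all } i,j\in\mathcal{W},$$ where $\sigma(x)=\frac{1}{1+e^{-x}}$ is the logistic sigmoid.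
   Context: The quantity $\mathrm{PMI}_{ij}=\log\frac{p(i,j)}{p(i)p(j)}$ is the pointwise mutual information, and $\sigma\mathrm{SPMI}_{ij}:=\sigma(\mathrm{PMI}_{ij}-\log k)$ is called the squashed shifted PMI matrix. Co-occurrence counts $\#(i,j)$ count how often words $i$ and $j$ appear together within a fixed-size context window of a corpus. *)

From HB Require Import structures.
From mathcomp Require Import all_boot all_order all_algebra.
From mathcomp Require Import all_classical all_reals all_analysis.
Set Implicit Arguments. Unset Strict Implicit. Unset Printing Implicit Defensive.
Import Order.TTheory GRing.Theory Num.Theory.
Local Open Scope ring_scope.

Definition sigmoid {R : realType} (x : R) : R := 1 / (1 + expR (- x)).

Section Defs.
Context {R : realType} {n : nat}.
Variable cnt : 'I_n -> 'I_n -> nat.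

Definition Ntot : R := \sum_(i < n) \sum_(j < n) (cnt i j)%:R.
Definition marg (i : 'I_n) : R := \sum_(j < n) (cnt i j)%:R.
Definition pjoint (i j : 'I_n) : R := (cnt i j)%:R / Ntot.
Definition pmarg (i : 'I_n) : R := marg i / Ntot.
Definition PMI (i j : 'I_n) : R := ln (pjoint i j / (pmarg i * pmarg j)).

(* The SGNS objective as a function of x_ij = <w_i, c_j>, with the
   expectation over the unigram distribution P(j') = p(j') written out. *)
Definition Lobj (k : R) (x : 'I_n -> 'I_n -> R) : R :=
  \sum_(i < n) \sum_(j < n) (cnt i j)%:R *
    (ln (x i j) + k * \sum_(j' < n) pmarg j' * ln (1 - x i j')).
End Defs.

From HB Require Import structures.
From mathcomp Require Import all_boot all_order all_algebra.
From mathcomp Require Import all_classical all_reals all_analysis.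
From mathcomp Require Import ring lra.
Set Implicit Arguments. Unset Strict Implicit. Unset Printing Implicit Defensive.
Import Order.TTheory GRing.Theory Num.Theory.
Local Open Scope ring_scope.

(** Collecting the negative-sampling term by context word, the objective
    splits into independent terms [#(i,j) ln x + b ln (1 - x)] with
    [b = k #(i) p(j)].  By [ln t <= t - 1], such a binary log-likelihood is
    maximal at [x = #(i,j) / (#(i,j) + b)], and unfolding the sigmoid shows
    that this is exactly [sigma (PMI_ij - ln k)]. *)

Lemma ln_le_subr1 (R : realType) (x : R) : 0 < x -> ln x <= x - 1.
Proof.
move=> x_gt0; have := @le_ln1Dx R (x - 1).
by rewrite subrKC; apply; lra.
Qed.

Lemma sumr_gt0 (R : numDomainType) (I : finType) (i0 : I) (F : I -> R) :
  (forall i, 0 < F i) -> 0 < \sum_i F i.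
Proof.
move=> F_gt0; rewrite (bigD1 i0) //= ltr_pwDl // sumr_ge0 // => i _.
exact: ltW.
Qed.

Lemma sigmoid_gt0 (R : realType) (x : R) : 0 < sigmoid x.
Proof. by rewrite /sigmoid divr_gt0 // addr_gt0 ?expR_gt0. Qed.

Lemma sigmoid_lt1 (R : realType) (x : R) : sigmoid x < 1.
Proof.
have dx_gt0 : 0 < 1 + expR (- x) by rewrite addr_gt0 ?expR_gt0.
by rewrite /sigmoid ltr_pdivrMr // mul1r ltrDl expR_gt0.
Qed.

Lemma sigmoid_lnB (R : realType) (q k : R) : 0 < q -> 0 < k ->
  sigmoid (ln q - ln k) = q / (q + k).
Proof.
move=> q_gt0 k_gt0; rewrite /sigmoid opprB expRB !lnK ?posrE //.
by field; rewrite !gt_eqF ?addr_gt0.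
Qed.

(* Gibbs' inequality for two outcomes: with [s = a / (a + b)],
   [a ln (x / s) + b ln ((1 - x) / (1 - s))
      <= a (x / s - 1) + b ((1 - x) / (1 - s) - 1) = 0]. *)
Lemma binary_loglik_le (R : realType) (a b x : R) :
  0 < a -> 0 < b -> 0 < x < 1 ->
  a * ln x + b * ln (1 - x) <= a * ln (a / (a + b)) + b * ln (1 - a / (a + b)).
Proof.
move=> a_gt0 b_gt0 /andP[x_gt0 x_lt1].
have ab_gt0 : 0 < a + b by lra.
have -> : 1 - a / (a + b) = b / (a + b) by field; lra.
have s_gt0 : 0 < a / (a + b) by exact: divr_gt0.
have t_gt0 : 0 < b / (a + b) by exact: divr_gt0.
have le_a : ln x - ln (a / (a + b)) <= x / (a / (a + b)) - 1.
  by rewrite -ln_div ?posrE // ln_le_subr1 // divr_gt0.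
have le_b : ln (1 - x) - ln (b / (a + b)) <= (1 - x) / (b / (a + b)) - 1.
  by rewrite -ln_div ?posrE ?subr_gt0 // ln_le_subr1 // divr_gt0 ?subr_gt0.
have balance : a * (x / (a / (a + b)) - 1) + b * ((1 - x) / (b / (a + b)) - 1) = 0.
  by field; rewrite !gt_eqF.
move: (ler_wpM2l (ltW a_gt0) le_a) (ler_wpM2l (ltW b_gt0) le_b).
rewrite !mulrBr; lra.
Qed.

Section Counts.
Context {R : realType} {n : nat} (cnt : 'I_n -> 'I_n -> nat).

Lemma LobjE (k : R) (x : 'I_n -> 'I_n -> R) :
  Lobj cnt k x = \sum_(i < n) \sum_(j < n)
    ((cnt i j)%:R * ln (x i j) + k * marg cnt i * pmarg cnt j * ln (1 - x i j)).
Proof.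
apply: eq_bigr => i _; under eq_bigr do rewrite mulrDr.
rewrite !big_split /=; congr (_ + _).
rewrite -big_distrl /= mulrA big_distrr /=.
by apply: eq_bigr => j _; rewrite /marg; ring.
Qed.

Hypothesis cnt_gt0 : forall i j, (0 < cnt i j)%N.

Let cntR_gt0 i j : 0 < (cnt i j)%:R :> R.
Proof. by rewrite ltr0n. Qed.

Lemma marg_gt0 i : 0 < marg cnt i :> R.
Proof. by apply: (sumr_gt0 i) => j; apply: cntR_gt0. Qed.

Lemma Ntot_gt0 (i0 : 'I_n) : 0 < Ntot cnt :> R.
Proof. by apply: (sumr_gt0 i0) => i; apply: marg_gt0. Qed.

Lemma pmarg_gt0 i : 0 < pmarg cnt i :> R.
Proof. by rewrite divr_gt0 ?marg_gt0 ?(Ntot_gt0 i). Qed.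

Lemma pjoint_gt0 i j : 0 < pjoint cnt i j :> R.
Proof. by rewrite divr_gt0 ?(Ntot_gt0 i). Qed.

Lemma sigmoid_shifted_PMI (k : R) i j : 0 < k ->
  sigmoid (PMI cnt i j - ln k) =
    (cnt i j)%:R / ((cnt i j)%:R + k * marg cnt i * pmarg cnt j).
Proof.
move=> k_gt0; have N_gt0 := Ntot_gt0 i.
have mi_gt0 := marg_gt0 i; have mj_gt0 := marg_gt0 j.
rewrite sigmoid_lnB //; last first.
  exact: divr_gt0 (pjoint_gt0 i j) (mulr_gt0 (pmarg_gt0 i) (pmarg_gt0 j)).
rewrite /pjoint /pmarg; field.
by rewrite !gt_eqF // ?addr_gt0 ?mulr_gt0 ?divr_gt0.
Qed.

End Counts.

Theorem theorem1 (R : realType) (n : nat) (cnt : 'I_n -> 'I_n -> nat) (k : R)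
  (hk : 0 < k) (hcnt : forall i j : 'I_n, (0 < cnt i j)%N) :
  let xs := fun i j : 'I_n => sigmoid (PMI cnt i j - ln k) in
  (forall i j : 'I_n, 0 < xs i j < 1) /\
  (forall x : 'I_n -> 'I_n -> R, (forall i j : 'I_n, 0 < x i j < 1) ->
     Lobj cnt k x <= Lobj cnt k xs).
Proof.
move=> xs; split=> [i j | x x_in01].
  by rewrite /xs sigmoid_gt0 sigmoid_lt1.
rewrite !LobjE; apply: ler_sum => i _; apply: ler_sum => j _.
rewrite /xs (sigmoid_shifted_PMI hcnt) //; apply: binary_loglik_le => //.
- by rewrite ltr0n hcnt.
- exact: mulr_gt0 (mulr_gt0 hk (marg_gt0 hcnt i)) (pmarg_gt0 hcnt j).
Qed.
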